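(* There is a constant $C\ge1$ such that for every positive integer $n$ and all real $x>n_*$, $y>-n_*$, \[ C^{-1}B(x,y)\le q(x,y)\le C\,B(x,y),\qquad B(x,y)=\sqrt{\frac{x-n_*}{n_*+y}}\cdot\Big|\frac1{x-y}\log\frac{x+2n}{y+2n}\Big|, \] where $\frac1{x-y}\log\frac{x+2n}{y+2n}$ is given its continuous value $\frac1{x+2n}$ at $y=x$.
   Context: $n_*=n-\tfrac12$. For real $x>0$, $s<0$, $h^-_x(s)=\dfrac{\sqrt x}{\pi(x-s)\sqrt{-s}}$ (hitting density of the negative half-line for planar Brownian motion from $x$), and for $x<0$, $s>0$, $h^+_x(s)=h^-_{-x}(-s)=\dfrac{\sqrt{-x}}{\pi(s-x)\sqrt{s}}$. For real $x>n_*$, $y>-n_*$, $q(x,y)=\int_{-\infty}^{-n_*}h^-_{x-n_*}(u-n_* )\,h^+_{u+n_*}(y+n_* )\,du$. *)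

From Stdlib Require Import Reals Lra.
Open Scope R_scope.

Definition nstar (n : nat) : R := INR n - 1/2.

Definition hminus (x s : R) : R := sqrt x / (PI * (x - s) * sqrt (- s)).

(* h^+_x(s) = h^-_{-x}(-s) = sqrt(-x) / (pi (s - x) sqrt s),  x < 0, s > 0 *)
Definition hplus (x s : R) : R := hminus (- x) (- s).

Definition q_integrand (n : nat) (x y u : R) : R :=
  hminus (x - nstar n) (u - nstar n) * hplus (u + nstar n) (y + nstar n).

Definition improper_integral_to (f : R -> R) (a l : R) : Prop :=
  (forall M, M <= a -> inhabited (Riemann_integrable f M a)) /\
  (forall eps, 0 < eps -> exists M0, M0 <= a /\
     forall M (pr : Riemann_integrable f M a), M <= M0 ->
       Rabs (RiemannInt pr - l) < eps).

Definition logquot (n : nat) (x y : R) : R :=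
  if Req_EM_T x y then / (x + 2 * INR n)
  else ln ((x + 2 * INR n) / (y + 2 * INR n)) / (x - y).

Definition Bfun (n : nat) (x y : R) : R :=
  sqrt ((x - nstar n) / (nstar n + y)) * Rabs (logquot n x y).

(* Write a = n_* (so 2n = 2a + 1).  For u <= -a the integrand of q factors as
       K * profile(u),  K = sqrt((x-a)/(a+y)) / pi^2,
       profile(u) = sqrt(-a-u) / (sqrt(a-u) (x-u) (y-u)),
   while B(x,y) = pi^2 K L with L = logq(x+2a+1, y+2a+1), where
   logq p q = log(p/q)/(p-q) is the slope of log between q and p (1/p at p = q).
   The proof splits (-oo, -a] at -3a.  On the tail u <= -3a the profile is
   comparable, within the factors 1/8 and 9, to 1/((x-a+1-u)(y-a+1-u)), whose
   integral over [M, -3a] is explicitly L - logq(x-a+1-M, y-a+1-M); on the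
   middle piece [-3a, -a] the profile integrates to at most 10 L.  Hence all
   integrals over [M, -a] are at most 19 L, and at least L/16 for M far enough
   out.  A nonnegative integrand with uniformly bounded partial integrals has
   an improper integral (monotone convergence via completeness of R), which
   gives q together with K L / 16 <= q <= 19 K L; the theorem follows with
   C = 16 pi^2.  The file develops, in order: the function logq, two explicit
   antiderivatives, improper integrals of nonnegative functions, and the
   estimates on the profile. *)

From Stdlib Require Import Reals Lra Classical.
From Coquelicot Require Import Coquelicot.
Open Scope R_scope.

Definition logq (p q : R) : R :=
  if Req_EM_T p q then / p else ln (p / q) / (p - q).

Lemma ln_le_sub1 z : 0 < z -> ln z <= z - 1.
Proof.
  intros Hz. pose proof (exp_ineq1_le (ln z)) as H. rewrite exp_ln in H; lra.
Qed.

(* Concavity of ln: its chord slope on [q, p] lies between ln' p and ln' q. *)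
Lemma ln_slope_bounds p q : 0 < q -> q < p -> / p <= ln (p / q) / (p - q) <= / q.
Proof.
  intros Hq Hqp.
  assert (Hpq : 0 < p / q) by (apply Rdiv_lt_0_compat; lra).
  assert (Hqp' : 0 < q / p) by (apply Rdiv_lt_0_compat; lra).
  pose proof (ln_le_sub1 _ Hpq) as Hup.
  pose proof (ln_le_sub1 _ Hqp') as Hlow.
  rewrite <- (Rinv_div p q), ln_Rinv in Hlow by exact Hpq.
  split; apply (Rmult_le_reg_r (p - q)); try lra;
    replace (ln (p / q) / (p - q) * (p - q)) with (ln (p / q)) by (field; lra).
  - replace (/ p * (p - q)) with (1 - / (p / q)) by (field; lra). lra.
  - replace (/ q * (p - q)) with (p / q - 1) by (field; lra). lra.
Qed.

(* logq is symmetric, which reduces its bounds to the case q < p. *)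
Lemma logq_sym p q : 0 < p -> 0 < q -> logq p q = logq q p.
Proof.
  intros Hp Hq. unfold logq.
  destruct (Req_EM_T p q), (Req_EM_T q p); subst; try lra.
  replace (q / p) with (/ (p / q)) by (field; lra).
  rewrite ln_Rinv by (apply Rdiv_lt_0_compat; lra). field. lra.
Qed.

Lemma logq_bounds p q : 0 < p -> 0 < q -> / Rmax p q <= logq p q <= / Rmin p q.
Proof.
  intros Hp Hq. destruct (Rtotal_order p q) as [H|[<-|H]].
  - rewrite logq_sym by lra. unfold logq. destruct (Req_EM_T q p); [lra|].
    rewrite Rmax_right, Rmin_left by lra. apply ln_slope_bounds; lra.
  - unfold logq. destruct (Req_EM_T p p); [|lra].
    rewrite Rmax_left, Rmin_left by lra. lra.
  - unfold logq. destruct (Req_EM_T p q); [lra|].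
    rewrite Rmax_left, Rmin_right by lra. apply ln_slope_bounds; lra.
Qed.

Lemma logq_ge p q m : 0 < p -> 0 < q -> p <= m -> q <= m -> / m <= logq p q.
Proof.
  intros Hp Hq Hpm Hqm. apply Rle_trans with (/ Rmax p q); [|apply logq_bounds; lra].
  apply Rinv_le_contravar; [apply Rmax_case; lra | apply Rmax_lub; lra].
Qed.

Lemma logq_le p q m : 0 < m -> m <= p -> m <= q -> logq p q <= / m.
Proof.
  intros Hm Hmp Hmq. apply Rle_trans with (/ Rmin p q); [apply logq_bounds; lra|].
  apply Rinv_le_contravar; [lra | apply Rmin_glb; lra].
Qed.

Lemma logq_pos p q : 0 < p -> 0 < q -> 0 < logq p q.
Proof.
  intros Hp Hq. apply Rlt_le_trans with (/ Rmax p q); [|apply logq_bounds; lra].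
  apply Rinv_0_lt_compat, Rmax_case; lra.
Qed.

Lemma is_RInt_inv_prod p q A B : A <= B -> B < p -> B < q ->
  is_RInt (fun u => / ((p - u) * (q - u))) A B
    (logq (p - B) (q - B) - logq (p - A) (q - A)).
Proof.
  intros HAB Hp Hq.
  assert (Hdom : forall u, Rmin A B <= u <= Rmax A B -> u < p /\ u < q).
  { intros u Hu. rewrite Rmin_left, Rmax_right in Hu by lra. lra. }
  assert (Hcont : forall u, Rmin A B <= u <= Rmax A B ->
            continuous (fun u => / ((p - u) * (q - u))) u).
  { intros u Hu. destruct (Hdom u Hu).
    apply (ex_derive_continuous (K := R_AbsRing) (V := R_NormedModule)).
    auto_derive. apply Rgt_not_eq, Rmult_lt_0_compat; lra. }
  destruct (Req_EM_T p q) as [<-|Hpq].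
  - replace (logq (p - B) (p - B) - logq (p - A) (p - A))
      with (minus ((fun u => / (p - u)) B) ((fun u => / (p - u)) A)).
    2:{ unfold logq. destruct (Req_EM_T (p - B) (p - B)); [|lra].
        destruct (Req_EM_T (p - A) (p - A)); [reflexivity|lra]. }
    apply (is_RInt_derive (V := R_CompleteNormedModule) (fun u => / (p - u)));
      [|exact Hcont].
    intros u Hu. destruct (Hdom u Hu). auto_derive; [lra|]. field. lra.
  - set (F := fun u => (ln (p - u) - ln (q - u)) / (p - q)).
    assert (HF : forall u, u < p -> u < q -> logq (p - u) (q - u) = F u).
    { intros u Hup Huq. unfold logq, F. destruct (Req_EM_T (p - u) (q - u)); [lra|].
      rewrite ln_div by lra. f_equal. ring. }
    rewrite !HF by lra. change (F B - F A) with (minus (F B) (F A)).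
    apply (is_RInt_derive (V := R_CompleteNormedModule) F); [|exact Hcont].
    intros u Hu. destruct (Hdom u Hu). unfold F. auto_derive; [lra|]. field. lra.
Qed.

Lemma is_RInt_inv_sqrt Y A B : A <= B -> B < Y ->
  is_RInt (fun u => / sqrt (Y - u)) A B (2 * sqrt (Y - A) - 2 * sqrt (Y - B)).
Proof.
  intros HAB HY.
  assert (Hdom : forall u, Rmin A B <= u <= Rmax A B -> 0 < Y - u).
  { intros u Hu. rewrite Rmin_left, Rmax_right in Hu by lra. lra. }
  replace (2 * sqrt (Y - A) - 2 * sqrt (Y - B))
    with (minus ((fun u => - 2 * sqrt (Y - u)) B) ((fun u => - 2 * sqrt (Y - u)) A))
    by (unfold minus, plus, opp; simpl; ring).
  apply (is_RInt_derive (V := R_CompleteNormedModule) (fun u => - 2 * sqrt (Y - u)));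
    intros u Hu;
    pose proof (Hdom u Hu) as Hu'; pose proof (sqrt_lt_R0 _ Hu').
  - auto_derive; [lra|]. replace (Y + - u) with (Y - u) by ring. field. lra.
  - apply (ex_derive_continuous (K := R_AbsRing) (V := R_NormedModule)).
    auto_derive. replace (Y + - u) with (Y - u) by ring. repeat split; lra.
Qed.

Section NonnegImproper.
Variables (f : R -> R) (b : R).
Hypothesis f_integrable : forall M1 M2, M1 <= M2 -> M2 <= b -> ex_RInt f M1 M2.
Hypothesis f_nonneg : forall u, u <= b -> 0 <= f u.

Lemma RInt_to_antitone M1 M2 : M1 <= M2 -> M2 <= b -> RInt f M2 b <= RInt f M1 b.
Proof.
  intros H12 H2b.
  rewrite <- (RInt_Chasles f M1 M2 b) by (apply f_integrable; lra).
  assert (0 <= RInt f M1 M2).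
  { apply RInt_ge_0; [lra | apply f_integrable; lra | intros; apply f_nonneg; lra]. }
  unfold plus; simpl. lra.
Qed.

Lemma improper_integral_of_bounded S :
  (forall M, M <= b -> RInt f M b <= S) ->
  exists l, improper_integral_to f b l /\ l <= S /\
            (forall M, M <= b -> RInt f M b <= l).
Proof.
  intros HS.
  set (E := fun v => exists M, M <= b /\ v = RInt f M b).
  assert (HE_bound : bound E) by (exists S; intros v [M [HM ->]]; auto).
  assert (HE_ne : exists v, E v) by (exists (RInt f b b), b; split; [lra | auto]).
  destruct (completeness E HE_bound HE_ne) as [l [Hub Hlub]].
  assert (Hle_l : forall M, M <= b -> RInt f M b <= l) by (intros M HM; apply Hub; exists M; auto).
  exists l. split; [split | split].
  - intros M HM. constructor. apply ex_RInt_Reals_0, f_integrable; lra.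
  - intros eps Heps.
    assert (Hnear : exists M0, M0 <= b /\ l - eps < RInt f M0 b).
    { apply NNPP. intros Hno.
      assert (Hub' : is_upper_bound E (l - eps)).
      { intros v [M [HM ->]]. apply Rnot_lt_le. intros Hc. apply Hno. exists M; auto. }
      specialize (Hlub _ Hub'). lra. }
    destruct Hnear as [M0 [HM0 Hlt]]. exists M0. split; [exact HM0|].
    intros M pr HM. rewrite <- RInt_Reals.
    pose proof (RInt_to_antitone M M0 HM HM0). pose proof (Hle_l M ltac:(lra)).
    apply Rabs_def1; lra.
  - apply Hlub. intros v [M [HM ->]]. auto.
  - exact Hle_l.
Qed.
End NonnegImproper.

Lemma RInt_le_is_RInt (f g : R -> R) A B I : A <= B -> ex_RInt f A B ->
  is_RInt g A B I -> (forall u, A < u < B -> f u <= g u) -> RInt f A B <= I.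
Proof.
  intros HAB Hf Hg Hfg. rewrite <- (is_RInt_unique g A B I Hg).
  apply RInt_le; [exact HAB | exact Hf | eexists; exact Hg | exact Hfg].
Qed.

Lemma RInt_ge_is_RInt (f g : R -> R) A B I : A <= B -> ex_RInt f A B ->
  is_RInt g A B I -> (forall u, A < u < B -> g u <= f u) -> I <= RInt f A B.
Proof.
  intros HAB Hf Hg Hfg. rewrite <- (is_RInt_unique g A B I Hg).
  apply RInt_le; [exact HAB | eexists; exact Hg | exact Hf | exact Hfg].
Qed.

Lemma div_le_div_cross p q r s : 0 < q -> 0 < s -> p * s <= r * q -> p / q <= r / s.
Proof.
  intros Hq Hs H. apply (Rmult_le_reg_r (q * s)); [nra|].
  replace (p / q * (q * s)) with (p * s) by (field; lra).
  replace (r / s * (q * s)) with (r * q) by (field; lra). exact H.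
Qed.

Section Integrand.
Variables a x y : R.
Hypothesis a_ge : 1/2 <= a.
Hypothesis x_gt : a < x.
Hypothesis y_gt : - a < y.

(* The integrand of q without its constant factor K. *)
Definition profile (u : R) : R :=
  sqrt (- a - u) / (sqrt (a - u) * ((x - u) * (y - u))).

(* B(x, y) = pi^2 * K * L, see [mainTheorem12]. *)
Let K := sqrt ((x - a) / (a + y)) / (PI * PI).
Let L := logq (x + (2 * a + 1)) (y + (2 * a + 1)).

Lemma K_nonneg : 0 <= K.
Proof.
  pose proof PI_RGT_0. unfold K, Rdiv.
  apply Rmult_le_pos; [apply sqrt_pos | left; apply Rinv_0_lt_compat; nra].
Qed.

Lemma L_pos : 0 < L.
Proof. apply logq_pos; lra. Qed.

Lemma integrand_factor u : u <= - a ->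
  hminus (x - a) (u - a) * hplus (u + a) (y + a) = K * profile u.
Proof.
  intros Hu. pose proof PI_RGT_0.
  assert (0 < sqrt (a - u)) by (apply sqrt_lt_R0; lra).
  assert (0 < sqrt (a + y)) by (apply sqrt_lt_R0; lra).
  unfold K, profile, hplus, hminus. rewrite sqrt_div_alt by lra.
  replace (x - a - (u - a)) with (x - u) by ring.
  replace (- (u - a)) with (a - u) by ring.
  replace (- (u + a)) with (- a - u) by ring.
  replace (- a - u - - (y + a)) with (y - u) by ring.
  replace (- - (y + a)) with (a + y) by ring.
  field. repeat split; lra.
Qed.

Lemma profile_nonneg u : u <= - a -> 0 <= profile u.
Proof.
  intros Hu. assert (0 < sqrt (a - u)) by (apply sqrt_lt_R0; lra).
  unfold profile, Rdiv. apply Rmult_le_pos; [apply sqrt_pos|].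
  left. apply Rinv_0_lt_compat, Rmult_lt_0_compat; [lra|]. apply Rmult_lt_0_compat; lra.
Qed.

Lemma profile_integrable M1 M2 : M1 <= M2 -> M2 <= - a -> ex_RInt profile M1 M2.
Proof.
  intros H12 H2. apply (ex_RInt_continuous (V := R_CompleteNormedModule)).
  intros u Hu. rewrite Rmin_left, Rmax_right in Hu by lra.
  assert (0 < sqrt (a - u)) by (apply sqrt_lt_R0; lra).
  apply (continuous_mult (K := R_AbsRing) (fun u => sqrt (- a - u))).
  - apply continuous_sqrt_comp.
    apply (ex_derive_continuous (K := R_AbsRing) (V := R_NormedModule)). auto_derive. exact I.
  - apply (ex_derive_continuous (K := R_AbsRing) (V := R_NormedModule)). auto_derive.
    replace (a + - u) with (a - u) by ring. repeat split; try lra.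
    apply Rgt_not_eq, Rmult_lt_0_compat; [lra|]. apply Rmult_lt_0_compat; lra.
Qed.

(* Comparison kernel on the tail; its integral is given by [is_RInt_inv_prod]. *)
Let tail_kernel (u : R) : R := / ((x - a + 1 - u) * (y - a + 1 - u)).

(* For u <= -3a: sqrt(a-u) <= 2 sqrt(-a-u) and (x-u)(y-u) is within a
   factor 9 of (x-a+1-u)(y-a+1-u). *)
Lemma profile_tail_bounds u : u <= - 3 * a ->
  tail_kernel u / 8 <= profile u <= 9 * tail_kernel u.
Proof.
  intros Hu. unfold tail_kernel, profile.
  assert (Ht : 0 < sqrt (a - u)) by (apply sqrt_lt_R0; lra).
  assert (Hs : 0 < sqrt (- a - u)) by (apply sqrt_lt_R0; lra).
  assert (Hst : sqrt (- a - u) <= sqrt (a - u)) by (apply sqrt_le_1_alt; lra).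
  assert (Hts : sqrt (a - u) <= 2 * sqrt (- a - u)).
  { apply Rsqr_incr_0_var; [|lra]. rewrite Rsqr_mult, !Rsqr_sqrt by lra.
    unfold Rsqr. lra. }
  set (s := sqrt (- a - u)) in *. set (t := sqrt (a - u)) in *.
  set (D := (x - u) * (y - u)). set (E := (x - a + 1 - u) * (y - a + 1 - u)).
  assert (HD : 0 < D) by (unfold D; apply Rmult_lt_0_compat; lra).
  assert (HE : 0 < E) by (unfold E; apply Rmult_lt_0_compat; lra).
  assert (HDE : D <= 4 * E) by (unfold D, E; nra).
  assert (HED : E <= 9 * D) by (unfold D, E; nra).
  split.
  - replace (/ E / 8) with (1 / (8 * E)) by (field; lra).
    apply div_le_div_cross; [lra | nra |]. nra.
  - replace (9 * / E) with (9 / E) by (field; lra).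
    apply div_le_div_cross; [nra | lra |]. nra.
Qed.

(* Tail integral bounds; the bracket increases to L as M -> -oo. *)
Lemma tail_integral_bounds M : M <= - 3 * a ->
  (L - logq (x - a + 1 - M) (y - a + 1 - M)) / 8 <= RInt profile M (- 3 * a) <=
  9 * (L - logq (x - a + 1 - M) (y - a + 1 - M)).
Proof.
  intros HM.
  assert (Hk := is_RInt_inv_prod (x - a + 1) (y - a + 1) M (- 3 * a) HM
                  ltac:(lra) ltac:(lra)).
  replace (x - a + 1 - - 3 * a) with (x + (2 * a + 1)) in Hk by ring.
  replace (y - a + 1 - - 3 * a) with (y + (2 * a + 1)) in Hk by ring.
  fold L in Hk. fold tail_kernel in Hk.
  set (T := L - logq (x - a + 1 - M) (y - a + 1 - M)) in *.
  assert (Hint : ex_RInt profile M (- 3 * a)) by (apply profile_integrable; lra).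
  split.
  - replace (T / 8) with (scal (/ 8) T) by (unfold scal; simpl; unfold mult; simpl; field).
    apply (RInt_ge_is_RInt _ _ _ _ _ HM Hint (is_RInt_scal _ _ _ _ _ Hk)).
    intros u Hu. unfold scal; simpl; unfold mult; simpl.
    pose proof (profile_tail_bounds u ltac:(lra)). lra.
  - apply (RInt_le_is_RInt _ _ _ _ _ HM Hint (is_RInt_scal _ _ _ 9 _ Hk)).
    intros u Hu. apply profile_tail_bounds; lra.
Qed.

(* Two pointwise bounds on [-3a, -a]: a constant one (useful when y >= a)
   and one keeping the singularity 1/sqrt(y-u) (useful when y < a). *)
Lemma profile_mid_far u : - 3 * a <= u <= - a ->
  profile u <= / ((x + a) * (y + a)).
Proof.
  intros Hu. unfold profile.
  assert (Ht : 0 < sqrt (a - u)) by (apply sqrt_lt_R0; lra).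
  assert (Hs : 0 <= sqrt (- a - u)) by apply sqrt_pos.
  assert (Hst : sqrt (- a - u) <= sqrt (a - u)) by (apply sqrt_le_1_alt; lra).
  assert (HD : (x + a) * (y + a) <= (x - u) * (y - u)) by nra.
  rewrite <- Rdiv_1_l.
  apply div_le_div_cross; [apply Rmult_lt_0_compat; [lra | nra] | nra |].
  rewrite Rmult_1_l. apply Rmult_le_compat; nra.
Qed.

Lemma profile_mid_near u : - 3 * a <= u <= - a ->
  profile u <= / (sqrt (2 * a) * (x + a)) * / sqrt (y - u).
Proof.
  intros Hu. unfold profile.
  assert (Ht : 0 < sqrt (a - u)) by (apply sqrt_lt_R0; lra).
  assert (H2a : 0 < sqrt (2 * a)) by (apply sqrt_lt_R0; lra).
  assert (Hyu : 0 < sqrt (y - u)) by (apply sqrt_lt_R0; lra).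
  assert (Hs : 0 <= sqrt (- a - u)) by apply sqrt_pos.
  assert (Hsy : sqrt (- a - u) <= sqrt (y - u)) by (apply sqrt_le_1_alt; lra).
  assert (H2at : sqrt (2 * a) <= sqrt (a - u)) by (apply sqrt_le_1_alt; lra).
  assert (Hsq : sqrt (y - u) * sqrt (y - u) = y - u) by (apply sqrt_sqrt; lra).
  rewrite <- Rinv_mult, <- Rdiv_1_l.
  apply div_le_div_cross;
    [apply Rmult_lt_0_compat; [lra | nra] | apply Rmult_lt_0_compat; [nra | lra] |].
  assert (H1 : sqrt (- a - u) * sqrt (y - u) <= y - u)
    by (rewrite <- Hsq at 2; apply Rmult_le_compat_r; lra).
  assert (H2 : sqrt (2 * a) * (x + a) <= sqrt (a - u) * (x - u))
    by (apply Rmult_le_compat; lra).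
  assert (H3 : sqrt (- a - u) * sqrt (y - u) * (sqrt (2 * a) * (x + a)) <=
                (y - u) * (sqrt (a - u) * (x - u))).
  { apply Rmult_le_compat; [| | exact H1 | exact H2]; apply Rmult_le_pos; lra. }
  replace (sqrt (- a - u) * (sqrt (2 * a) * (x + a) * sqrt (y - u)))
    with (sqrt (- a - u) * sqrt (y - u) * (sqrt (2 * a) * (x + a))) by ring.
  replace (1 * (sqrt (a - u) * ((x - u) * (y - u))))
    with ((y - u) * (sqrt (a - u) * (x - u))) by ring.
  exact H3.
Qed.

Lemma mid_integral_far : a <= y -> RInt profile (- 3 * a) (- a) <= 4 * L.
Proof.
  intros Hya.
  set (m := 2 * (x + a) * (y + a) / a).
  assert (HLm : / m <= L).
  { apply logq_ge; try lra; unfold m;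
      apply (Rmult_le_reg_r a); try lra; field_simplify; nra. }
  set (c := / ((x + a) * (y + a))).
  apply Rle_trans with (scal (- a - - 3 * a) c).
  - apply (RInt_le_is_RInt _ (fun _ => c)); [lra | apply profile_integrable; lra |
      apply (is_RInt_const (V := R_NormedModule)) |].
    intros u Hu. apply profile_mid_far; lra.
  - replace (scal (- a - - 3 * a) c) with (4 * / m)
      by (unfold scal, c, m; simpl; unfold mult; simpl; field; nra).
    lra.
Qed.

Lemma mid_integral_near : y < a -> RInt profile (- 3 * a) (- a) <= 10 * L.
Proof.
  intros Hya.
  set (c := / (sqrt (2 * a) * (x + a))).
  assert (H2a : 0 < sqrt (2 * a)) by (apply sqrt_lt_R0; lra).
  assert (Hc : 0 <= c) by (left; apply Rinv_0_lt_compat, Rmult_lt_0_compat; lra).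
  assert (Hsq := is_RInt_inv_sqrt y (- 3 * a) (- a) ltac:(lra) ltac:(lra)).
  replace (y - - 3 * a) with (y + 3 * a) in Hsq by ring.
  replace (y - - a) with (y + a) in Hsq by ring.
  assert (Hy3a : sqrt (y + 3 * a) <= 2 * sqrt (2 * a)).
  { apply Rsqr_incr_0_var; [|lra]. rewrite Rsqr_mult, !Rsqr_sqrt by lra.
    unfold Rsqr. lra. }
  assert (HLm : / (5 / 2 * (x + a)) <= L) by (apply logq_ge; lra).
  apply Rle_trans with (scal c (2 * sqrt (y + 3 * a) - 2 * sqrt (y + a))).
  - eapply RInt_le_is_RInt;
      [lra | apply profile_integrable; lra | exact (is_RInt_scal _ _ _ c _ Hsq) |].
    intros u Hu. apply profile_mid_near; lra.
  - unfold scal; simpl; unfold mult; simpl.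
    pose proof (sqrt_pos (y + a)).
    apply Rle_trans with (c * (4 * sqrt (2 * a))); [apply Rmult_le_compat_l; lra|].
    replace (c * (4 * sqrt (2 * a))) with (10 * / (5 / 2 * (x + a)))
      by (unfold c; field; lra).
    lra.
Qed.

Lemma mid_integral_bound : RInt profile (- 3 * a) (- a) <= 10 * L.
Proof.
  pose proof L_pos. destruct (Rlt_le_dec y a) as [Hya|Hya].
  - exact (mid_integral_near Hya).
  - pose proof (mid_integral_far Hya). lra.
Qed.

(* Uniform upper bound on the partial integrals: tail <= 9 L, middle <= 10 L. *)
Lemma profile_integral_upper M : M <= - a -> RInt profile M (- a) <= 19 * L.
Proof.
  intros HM.
  set (M' := Rmin M (- 3 * a)).
  assert (HM' : M' <= - 3 * a) by apply Rmin_r.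
  apply Rle_trans with (RInt profile M' (- a)).
  { apply (RInt_to_antitone profile (- a) profile_integrable profile_nonneg);
      [apply Rmin_l | lra]. }
  rewrite <- (RInt_Chasles profile M' (- 3 * a) (- a)) by (apply profile_integrable; lra).
  unfold plus; simpl.
  pose proof (tail_integral_bounds M' HM') as [_ Htail].
  pose proof (logq_pos (x - a + 1 - M') (y - a + 1 - M') ltac:(lra) ltac:(lra)).
  pose proof mid_integral_bound. lra.
Qed.

(* Taking M = -3a - (2/L + 1) makes the tail term logq <= L/2. *)
Lemma profile_integral_lower : exists M, M <= - a /\ L / 16 <= RInt profile M (- a).
Proof.
  pose proof L_pos.
  set (V := 2 / L + 1).
  assert (HV : 2 / L < V) by (unfold V; lra).
  assert (HV0 : 0 < V) by (assert (0 < 2 / L) by (apply Rdiv_lt_0_compat; lra); lra).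
  exists (- 3 * a - V). split; [lra|].
  rewrite <- (RInt_Chasles profile (- 3 * a - V) (- 3 * a) (- a))
    by (apply profile_integrable; lra).
  unfold plus; simpl.
  assert (0 <= RInt profile (- 3 * a) (- a)).
  { apply RInt_ge_0; [lra | apply profile_integrable; lra |].
    intros; apply profile_nonneg; lra. }
  pose proof (tail_integral_bounds (- 3 * a - V) ltac:(lra)) as [Htail _].
  assert (Hfar : logq (x - a + 1 - (- 3 * a - V)) (y - a + 1 - (- 3 * a - V)) <= L / 2).
  { apply Rle_trans with (/ V); [apply logq_le; lra|].
    replace (L / 2) with (/ (2 / L)) by (field; lra).
    apply Rinv_le_contravar; [apply Rdiv_lt_0_compat|]; lra. }
  lra.
Qed.

Lemma integrand_improper_bounds :
  exists l, improper_integral_to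
              (fun u => hminus (x - a) (u - a) * hplus (u + a) (y + a)) (- a) l /\
            K * L / 16 <= l <= 19 * K * L.
Proof.
  set (f := fun u => hminus (x - a) (u - a) * hplus (u + a) (y + a)).
  assert (Hf_eq : forall A B, A <= B -> B <= - a ->
            forall u, Rmin A B < u < Rmax A B -> K * profile u = f u).
  { intros A B HAB HB u Hu. rewrite Rmin_left, Rmax_right in Hu by lra.
    symmetry. apply integrand_factor. lra. }
  assert (Hf_int : forall M1 M2, M1 <= M2 -> M2 <= - a -> ex_RInt f M1 M2).
  { intros M1 M2 H12 H2.
    apply (ex_RInt_ext (V := R_NormedModule) (fun u => K * profile u));
      [exact (Hf_eq M1 M2 H12 H2) |].
    exact (ex_RInt_scal (V := R_NormedModule) profile M1 M2 K
             (profile_integrable M1 M2 H12 H2)). }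
  assert (Hf_RInt : forall M, M <= - a -> RInt f M (- a) = K * RInt profile M (- a)).
  { intros M HM.
    rewrite <- (RInt_ext (V := R_CompleteNormedModule) (fun u => K * profile u) f M (- a)
                  (Hf_eq M (- a) HM ltac:(lra))).
    exact (RInt_scal (V := R_CompleteNormedModule) profile M (- a) K
             (profile_integrable M (- a) HM ltac:(lra))). }
  assert (Hf_nonneg : forall u, u <= - a -> 0 <= f u).
  { intros u Hu. unfold f. rewrite integrand_factor by exact Hu.
    apply Rmult_le_pos; [apply K_nonneg | apply profile_nonneg, Hu]. }
  pose proof K_nonneg.
  destruct (improper_integral_of_bounded f (- a) Hf_int Hf_nonneg (19 * K * L))
    as [l [Hl [Hup Hlow]]].
  { intros M HM. rewrite Hf_RInt by exact HM.
    replace (19 * K * L) with (K * (19 * L)) by ring.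
    apply Rmult_le_compat_l; [exact H | apply profile_integral_upper, HM]. }
  exists l. split; [exact Hl | split; [|exact Hup]].
  destruct profile_integral_lower as [M [HM HLM]].
  specialize (Hlow M HM). rewrite Hf_RInt in Hlow by exact HM.
  apply Rle_trans with (K * RInt profile M (- a)); [|exact Hlow].
  replace (K * L / 16) with (K * (L / 16)) by field.
  apply Rmult_le_compat_l; [exact H | exact HLM].
Qed.
End Integrand.

Lemma logquot_logq n x y : logquot n x y = logq (x + 2 * INR n) (y + 2 * INR n).
Proof.
  unfold logquot, logq.
  destruct (Req_EM_T x y), (Req_EM_T (x + 2 * INR n) (y + 2 * INR n)); try lra.
  replace (x + 2 * INR n - (y + 2 * INR n)) with (x - y) by ring. reflexivity.
Qed.

Theorem mainTheorem12 :
  exists C : R, 1 <= C /\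
    forall (n : nat) (x y : R), (1 <= n)%nat ->
      nstar n < x -> - nstar n < y ->
      exists q : R,
        improper_integral_to (q_integrand n x y) (- nstar n) q /\
        / C * Bfun n x y <= q /\ q <= C * Bfun n x y.
Proof.
  pose proof PI2_3_2 as Hpi.
  exists (16 * PI * PI). split; [nra|].
  intros n x y Hn Hx Hy.
  assert (Ha : 1 / 2 <= nstar n) by (unfold nstar; apply le_INR in Hn; simpl in Hn; lra).
  destruct (integrand_improper_bounds (nstar n) x y Ha Hx Hy) as [q [Hq [Hlow Hup]]].
  exists q. split; [exact Hq|].
  unfold Bfun. rewrite logquot_logq.
  replace (2 * INR n) with (2 * nstar n + 1) by (unfold nstar; lra).
  set (L := logq (x + (2 * nstar n + 1)) (y + (2 * nstar n + 1))) in *.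
  set (S := sqrt ((x - nstar n) / (nstar n + y))) in *.
  assert (HL : 0 < L) by (apply logq_pos; lra).
  assert (HS : 0 <= S) by apply sqrt_pos.
  rewrite Rabs_pos_eq by lra.
  assert (HB : S * L = PI * PI * (S / (PI * PI) * L)) by (field; lra).
  rewrite HB. split.
  - replace (/ (16 * PI * PI) * (PI * PI * (S / (PI * PI) * L)))
      with (S / (PI * PI) * L / 16) by (field; lra). exact Hlow.
  - assert (HKL : 0 <= S / (PI * PI) * L)
      by (apply Rmult_le_pos; [apply Rmult_le_pos; [lra | left; apply Rinv_0_lt_compat; nra] | lra]).
    apply Rle_trans with (19 * (S / (PI * PI) * L)); [lra|].
    replace (16 * PI * PI * (PI * PI * (S / (PI * PI) * L)))
      with (16 * PI * PI * (PI * PI) * (S / (PI * PI) * L)) by ring.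
    assert (Hpi2 : 9 <= PI * PI) by nra.
    apply Rmult_le_compat_r; [exact HKL | nra].
Qed.
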